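(* Let $L$ be a language of algebras, let $\mathfrak A,\mathfrak B$ be $L$-algebras with universes $A,B$, and let $H:\mathfrak A\to\mathfrak B$ be a homomorphism. (1) Let $a,b\in A$ and suppose that: if every element of $\uparrow_{\mathfrak A}(a\to b)$ is trivial in $(\mathfrak A,\mathfrak B)$, then every element of $\uparrow_{\mathfrak B}(Ha\to Hb)$ is trivial in $(\mathfrak A,\mathfrak B)$. Then $a\to b\lesssim_{(\mathfrak A,\mathfrak B)}Ha\to Hb$. (2) If $H$ is an isomorphism, then $a:b\approx_{(\mathfrak A,\mathfrak B)}Ha:Hb$ for all $a,b\in A$.
   Context: Let $L$ be a language of algebras: a set of function symbols, each with an arity in $\mathbb N$ (constants are 0-ary function symbols). Fix a countably infinite set $X$ of variables; $T_{L,X}$ is the set of $L$-terms over $X$, and $X(s)$ denotes the set of variables occurring in a term $s$. For an $L$-algebra $\mathfrak A$ with universe $A$, every term $s$ induces a function $s^{\mathfrak A}$, evaluated at assignments of elements of $A$ to variables. A homomorphism $H:\mathfrak A\to\mathfrak B$ is a map $A\to B$ commuting with all function symbols of $L$; an isomorphism is a bijective homomorphism. An arrow of $\mathfrak A$ is a pair $(a,b)\in A\times A$, written $a\to b$. The generalizations of an arrow $a\to b$ in $\mathfrak A$ are the pairs of arbitrary terms $s\to t$ with $s,t\in T_{L,X}$ such that there is an assignment $\sigma$ of elements of $A$ to the variables in $X(s)\cup X(t)$ with $s^{\mathfrak A}(\sigma)=a$ and $t^{\mathfrak A}(\sigma)=b$; their set is denoted $\uparrow_{\mathfrak A}(a\to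 b)$. For $L$-algebras $\mathfrak A,\mathfrak B$, an arrow $a\to b$ of $\mathfrak A$ and an arrow $c\to d$ of $\mathfrak B$, set $(a\to b)\uparrow_{(\mathfrak A,\mathfrak B)}(c\to d):=\uparrow_{\mathfrak A}(a\to b)\cap\uparrow_{\mathfrak B}(c\to d)$. A pair of terms $s\to t$ is trivial in $(\mathfrak A,\mathfrak B)$ if it belongs to $\uparrow_{\mathfrak A}(e)$ for every arrow $e$ of $\mathfrak A$ and to $\uparrow_{\mathfrak B}(e')$ for every arrow $e'$ of $\mathfrak B$. We write $a\to b\lesssim_{(\mathfrak A,\mathfrak B)}c\to d$ iff either (i) every element of $\uparrow_{\mathfrak A}(a\to b)\cup\uparrow_{\mathfrak B}(c\to d)$ is trivial in $(\mathfrak A,\mathfrak B)$, or (ii) $(a\to b)\uparrow_{(\mathfrak A,\mathfrak B)}(c\to d)$ contains an element not trivial in $(\mathfrak A,\mathfrak B)$ and, for every arrow $c'\to d'$ of $\mathfrak B$, the inclusion $(a\to b)\uparrow_{(\mathfrak A,\mathfrak B)}(c\to d)\subseteq(a\to b)\uparrow_{(\mathfrak A,\mathfrak B)}(c'\to d')$ implies equality of these two sets. Define $a\to b\approx_{(\mathfrak A,\mathfrak B)}c\to d$ iff $a\to b\lesssim_{(\mathfrak A,\mathfrak B)}c\to d$ and $c\to d\lesssim_{(\mathfrak B,\mathfrak A)}a\to b$. For $a,b\in A$ and $c,d\in B$, the similarity-based analogical proportion $a:b\approx_{(\mathfrak A,\mathfrak B)}c:d$ holds iff $a\to b\approx_{(\mathfrak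 A,\mathfrak B)}c\to d$ and $b\to a\approx_{(\mathfrak A,\mathfrak B)}d\to c$. We write $\approx_{\mathfrak A}$ for $\approx_{(\mathfrak A,\mathfrak A)}$. *)

From mathcomp Require Import all_boot.
Set Implicit Arguments. Unset Strict Implicit. Unset Printing Implicit Defensive.

(* A language L: a type of function symbols F with arities ar : F -> nat
   (constants have arity 0).  Variables X := nat (countably infinite). *)
Section Algebras.
Variables (F : Type) (ar : F -> nat).

Inductive term : Type :=
| Var of nat
| App (f : F) of ('I_(ar f) -> term).

Record algebra : Type := Algebra {
  carrier :> Type;
  op : forall f : F, ('I_(ar f) -> carrier) -> carrier }.

Fixpoint eval (A : algebra) (sigma : nat -> A) (s : term) : A :=
  match s with
  | Var x => sigma x
  | App f ts => @op A f (fun i => eval sigma (ts i))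
  end.

Definition is_hom (A B : algebra) (H : A -> B) : Prop :=
  forall (f : F) (args : 'I_(ar f) -> A), H (@op A f args) = @op B f (fun i => H (args i)).

Definition is_iso (A B : algebra) (H : A -> B) : Prop := is_hom H /\ bijective H.

Definition gen (A : algebra) (a b : A) (s t : term) : Prop :=
  exists sigma : nat -> A, eval sigma s = a /\ eval sigma t = b.

Definition trivial (A B : algebra) (s t : term) : Prop :=
  (forall a b : A, gen a b s t) /\ (forall c d : B, gen c d s t).

Definition jgen (A B : algebra) (a b : A) (c d : B) (s t : term) : Prop :=
  gen a b s t /\ gen c d s t.

Definition arrow_le (A B : algebra) (a b : A) (c d : B) : Prop :=
  (forall s t, gen a b s t \/ gen c d s t -> trivial A B s t)
  \/
  ((exists s t, jgen a b c d s t /\ ~ trivial A B s t) /\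
   forall c' d' : B,
     (forall s t, jgen a b c d s t -> jgen a b c' d' s t) ->
     (forall s t, jgen a b c' d' s t -> jgen a b c d s t)).

Definition arrow_approx (A B : algebra) (a b : A) (c d : B) : Prop :=
  arrow_le a b c d /\ arrow_le c d a b.

Definition analogy (A B : algebra) (a b : A) (c d : B) : Prop :=
  arrow_approx a b c d /\ arrow_approx b a d c.

End Algebras.

(* A homomorphism H pushes every assignment of A forward, so every
   generalization of a -> b is one of H a -> H b.  Hence the joint
   generalizations of a -> b and H a -> H b are exactly those of a -> b: this
   set contains every joint set (a -> b) up (c' -> d'), so it is maximal, and it
   has a non-trivial element unless all generalizations of a -> b are trivial.
   For an isomorphism, the inverse is again a homomorphism, so the hypothesis
   of the first part holds for H and for its inverse in both directions. *)

From Stdlib Require Import Classical FunctionalExtensionality.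
From mathcomp Require Import all_boot.

Set Implicit Arguments.
Unset Strict Implicit.

Section Homomorphisms.
Variables (F : Type) (ar : F -> nat).

Lemma eval_hom (A B : algebra ar) (H : A -> B) (sigma : nat -> A) (s : term ar) :
  is_hom H -> H (eval sigma s) = eval (H \o sigma) s.
Proof.
move=> hH; elim: s => [x|f ts IH] //=.
by rewrite hH; congr (op _); apply: functional_extensionality_dep.
Qed.

Lemma gen_hom (A B : algebra ar) (H : A -> B) (a b : A) (s t : term ar) :
  is_hom H -> gen a b s t -> gen (H a) (H b) s t.
Proof.
move=> hH [sigma [<- <-]]; exists (H \o sigma).
by rewrite -!eval_hom.
Qed.

Lemma jgen_hom (A B : algebra ar) (H : A -> B) (a b : A) (s t : term ar) :
  is_hom H -> jgen a b (H a) (H b) s t <-> gen a b s t.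
Proof. by move=> hH; split=> [[]//|g]; split=> //; apply: gen_hom. Qed.

Lemma hom_can (A B : algebra ar) (H : A -> B) (K : B -> A) :
  is_hom H -> cancel H K -> cancel K H -> is_hom K.
Proof.
move=> hH HK KH f args; apply: (can_inj HK); rewrite hH KH; congr (op _).
by apply: functional_extensionality_dep => i; rewrite KH.
Qed.

Lemma arrow_le_hom (A B : algebra ar) (H : A -> B) (a b : A) :
  is_hom H ->
  ((forall s t, gen a b s t -> trivial A B s t) ->
   (forall s t, gen (H a) (H b) s t -> trivial A B s t)) ->
  arrow_le a b (H a) (H b).
Proof.
move=> hH triv_transfer.
have [all_triv|] := classic (forall s t, gen a b s t -> trivial A B s t).
  left=> s t; case=> [/all_triv|/(triv_transfer all_triv)] //.
move=> /not_all_ex_not [s] /not_all_ex_not [t].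
move=> /(imply_to_and (gen a b s t)) [g ntriv].
right; split.
  by exists s, t; split; first exact/jgen_hom.
by move=> c' d' _ s' t' [g' _]; apply/jgen_hom.
Qed.

Lemma arrow_approx_iso (A B : algebra ar) (H : A -> B) (a b : A) :
  is_iso H -> arrow_approx a b (H a) (H b).
Proof.
move=> [hH [K HK KH]]; have hK := hom_can hH HK KH.
have gen_iso a' b' s t : gen (H a') (H b') s t -> gen a' b' s t.
  by move=> /(gen_hom hK); rewrite !HK.
split; first by apply: arrow_le_hom => // all_triv s t /gen_iso /all_triv.
(* Read a, b as K (H a), K (H b) to apply [arrow_le_hom] to K. *)
rewrite -[X in arrow_le _ _ X _]HK -[X in arrow_le _ _ _ X]HK.
apply: arrow_le_hom => // all_triv s t; rewrite !HK => g.
exact/all_triv/gen_hom.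
Qed.

End Homomorphisms.

Theorem theorem7 (F : Type) (ar : F -> nat) (A B : algebra ar) (H : A -> B)
  (hH : is_hom H) :
  (forall a b : A,
     ((forall s t, gen a b s t -> trivial A B s t) ->
      (forall s t, gen (H a) (H b) s t -> trivial A B s t)) ->
     arrow_le a b (H a) (H b))
  /\
  (is_iso H -> forall a b : A, analogy a b (H a) (H b)).
Proof.
split=> [a b|isoH a b]; first exact: arrow_le_hom.
by split; apply: arrow_approx_iso isoH.
Qed.
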